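(* Let $n\ge3$ and $3\le j\le n$ be integers and let $\alpha\in I_{j,n}$. Then the coefficient $c^{(n)}_\alpha$ is non-negative if $j$ is even and non-positive if $j$ is odd.
   Context: Let $T_1,T_2,\dots$ be indeterminates, $T_\alpha=T_{\alpha_1}\cdots T_{\alpha_d}$. Define linear operators $L,H$ on monomials (constants sent to $0$): $L(T_{\alpha_1}\cdots T_{\alpha_r})=\sum_{1\le i<j\le r}T_{\alpha_1}\cdots T_{\alpha_i+1}\cdots T_{\alpha_j+1}\cdots T_{\alpha_r}$, $H(T_{\alpha_1}\cdots T_{\alpha_r})=-\frac12\sum_{k=1}^{r}\sum_{l=1}^{\alpha_k-1}\binom{\alpha_k}{l}T_{1+l}T_{1+\alpha_k-l}\prod_{i\ne k}T_{\alpha_i}$. For $n\ge2$ let $A_n=-\sum_{k=1}^{n-1}\binom{n}{k}T_{1+k}T_{1+n-k}T_n$; set $R_2=0$, $R_{n+1}=A_n+L(R_n)+H(R_n)$. $I_{j,n}$ is the set of non-increasing $j$-tuples of integers in $\{2,\dots,n-1\}$ with sum $2n$, and $c^{(n)}_\alpha$ is the coefficient of the monomial $T_\alpha$ in $R_n$. *)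

From mathcomp Require Import all_boot all_order all_algebra.
Set Implicit Arguments. Unset Strict Implicit. Unset Printing Implicit Defensive.
Import Order.TTheory GRing.Theory Num.Theory.
Local Open Scope ring_scope.

(* Polynomials in T_1, T_2, ... with rational coefficients are represented as
   formal finite sums: a list of (coefficient, monomial) pairs, where the
   monomial T_{a_1} ... T_{a_r} is the sequence [:: a_1; ...; a_r].
   Two monomials are equal iff their sequences are permutations of each
   other (the T_i commute). *)
Definition mono := seq nat.
Definition tpoly := seq (rat * mono).

Definition coef (p : tpoly) (alpha : mono) : rat :=
  \sum_(t <- p | perm_eq t.2 alpha) t.1.

Definition linext (f : mono -> tpoly) (p : tpoly) : tpoly :=
  flatten [seq [seq (t.1 * u.1, u.2) | u <- f t.2] | t <- p].

Definition incr2 (m : mono) (i j : nat) : mono :=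
  [seq (nth 0%N m t + ((t == i) || (t == j)))%N | t <- iota 0 (size m)].

Definition Lmono (m : mono) : tpoly :=
  [seq (1, incr2 m i j) | i <- iota 0 (size m), j <- iota i.+1 (size m - i.+1)].

Definition Hmono (m : mono) : tpoly :=
  [seq (- ('C(nth 0%N m k, l))%:R / 2,
        [:: l.+1; (nth 0%N m k - l).+1] ++ (take k m ++ drop k.+1 m))
  | k <- iota 0 (size m), l <- iota 1 (nth 0%N m k).-1].

Definition Lop := linext Lmono.
Definition Hop := linext Hmono.

Definition Apoly (n : nat) : tpoly :=
  [seq (- ('C(n, k))%:R, [:: k.+1; (n - k).+1; n]) | k <- iota 1 n.-1].

(* Rseq k = R_{k+2} *)
Fixpoint Rseq (k : nat) : tpoly :=
  match k with
  | 0 => [::]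
  | k'.+1 => Apoly k'.+2 ++ Lop (Rseq k') ++ Hop (Rseq k')
  end.

Definition Rpoly (n : nat) : tpoly := Rseq (n - 2).

Definition in_I (j n : nat) (alpha : mono) : bool :=
  [&& size alpha == j, sorted geq alpha,
      all (fun a => (2 <= a <= n.-1)%N) alpha & sumn alpha == (2 * n)%N].

From mathcomp Require Import all_boot all_order all_algebra.
From mathcomp Require Import ring.
Import Order.TTheory GRing.Theory Num.Theory.
Local Open Scope ring_scope.

(* Every term of R_n has sign (-1)^(degree of its monomial): this holds for
   A_n (degree 3, negative coefficients), L preserves both degree and sign,
   and H raises the degree by one while contributing negative coefficients.
   Monomials in I_{j,n} have degree j. *)

Definition msign (m : mono) : rat := (-1) ^+ size m.

Definition sign_coherent (p : tpoly) : bool :=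
  all (fun t => 0 <= t.1 * msign t.2) p.

Definition sign_preserving (f : mono -> tpoly) : Prop :=
  forall m u, u \in f m -> 0 <= u.1 * msign u.2 * msign m.

Lemma sign_coherent_cat (p q : tpoly) :
  sign_coherent (p ++ q) = sign_coherent p && sign_coherent q.
Proof. exact: all_cat. Qed.

Lemma msign_sqr (m : mono) : msign m * msign m = 1.
Proof. by rewrite /msign -exprMn mulrNN mulr1 expr1n. Qed.

Lemma linext_sign_coherent (f : mono -> tpoly) (p : tpoly) :
  sign_preserving f -> sign_coherent p -> sign_coherent (linext f p).
Proof.
move=> f_sign /allP p_coh; apply/allP => x.
case/flattenP => _ /mapP [t tp ->] /mapP [u uf ->] /=.
have -> : t.1 * u.1 * msign u.2
          = (t.1 * msign t.2) * (u.1 * msign u.2 * msign t.2).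
  by rewrite -[LHS]mulr1 -(msign_sqr t.2); ring.
by apply: mulr_ge0; [exact: p_coh | exact: f_sign].
Qed.

Lemma Lmono_sign_preserving : sign_preserving Lmono.
Proof.
move=> m u /allpairsPdep [i [j [_ _ ->]]] /=.
by rewrite mul1r /msign size_map size_iota -exprD -signr_odd addnn odd_double.
Qed.

Lemma Hmono_sign_preserving : sign_preserving Hmono.
Proof.
move=> m u /allpairsPdep [k [l [k_in _ ->]]] /=.
rewrite mem_iota add0n in k_in; case/andP: k_in => _ lt_k_m.
set m' := (X in msign X).
have -> : msign m' = - msign m.
  rewrite /msign /m' /= size_cat size_take size_drop lt_k_m.
  by rewrite -addSn subnKC // exprS mulN1r.
by rewrite -(mulrA _ (- msign m)) (mulNr (msign m)) msign_sqr mulrN1 mulNr opprK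
   divr_ge0 ?ler0n.
Qed.

Lemma Apoly_sign_coherent (n : nat) : sign_coherent (Apoly n).
Proof. by apply/allP => _ /mapP [k _ ->]; rewrite /msign /= mulrN1 opprK ler0n. Qed.

Lemma Rseq_sign_coherent (k : nat) : sign_coherent (Rseq k).
Proof.
elim: k => [//|k IHk].
have L_coh := linext_sign_coherent _ _ Lmono_sign_preserving IHk.
have H_coh := linext_sign_coherent _ _ Hmono_sign_preserving IHk.
by rewrite [Rseq _.+1]/Rseq -/Rseq !sign_coherent_cat Apoly_sign_coherent L_coh H_coh.
Qed.

Lemma coef_sign (p : tpoly) (alpha : mono) :
  sign_coherent p -> 0 <= coef p alpha * msign alpha.
Proof.
move=> /allP p_coh; rewrite /coef mulr_suml big_seq_cond.
apply: sumr_ge0 => t /andP [tp perm_t].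
by rewrite /msign -(perm_size perm_t); exact: p_coh.
Qed.

Theorem mainTheorem10 (n j : nat) (alpha : seq nat) :
  (3 <= n)%N -> (3 <= j <= n)%N -> in_I j n alpha ->
  if ~~ odd j then 0 <= coef (Rpoly n) alpha else coef (Rpoly n) alpha <= 0.
Proof.
move=> _ _ /and4P [/eqP size_alpha _ _ _].
have := coef_sign _ alpha (Rseq_sign_coherent (n - 2)).
rewrite /Rpoly /msign size_alpha -signr_odd.
by case: (odd j); rewrite /= ?expr0 ?mulr1 // expr1 mulrN1 oppr_ge0.
Qed.
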